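(* Let $L\ge2$, $w\in\mathbb R\setminus\{0\}$, $\theta\in\mathbb R$, and consider on $\mathcal F(\mathbb C^L)$ the Hamiltonians, for $\alpha\in[0,\pi]$, $$\mathbf H^{\mathrm{Kit}}_\Lambda(\alpha)=w\sum_{j=1}^{L-1}\big(-{\mathfrak a}_j^*{\mathfrak a}_{j+1}-{\mathfrak a}_{j+1}^*{\mathfrak a}_j+e^{i\theta}{\mathfrak a}_j{\mathfrak a}_{j+1}+e^{-i\theta}{\mathfrak a}_{j+1}^*{\mathfrak a}_j^*\big)+w\big(-e^{-i\alpha}{\mathfrak a}_L^*{\mathfrak a}_1-e^{i\alpha}{\mathfrak a}_1^*{\mathfrak a}_L+e^{i\theta}e^{i\alpha}{\mathfrak a}_L{\mathfrak a}_1+e^{-i\theta}e^{-i\alpha}{\mathfrak a}_1^*{\mathfrak a}_L^*\big)$$ (the Kitaev chain with $\mu=0$, $\Delta=e^{i\theta}w$ and a flux $\alpha$ inserted in the boundary bond). Then the $\mathbb Z_2$-valued spectral flow of the path $\alpha\in[0,\pi]\mapsto\mathbf H^{\mathrm{Kit}}_\Lambda(\alpha)$ is non-trivial, i.e. $\mathrm{Sf}_2(A_\Lambda(0),A_\Lambda(\pi))=-1$.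
   Context: $\mathcal F(\mathbb C^L)$ is the fermionic Fock space with CAR operators ${\mathfrak a}_j$, $j=1,\dots,L$. Majorana operators: ${\mathfrak b}_{2j-1}=e^{i\theta/2}{\mathfrak a}_j+e^{-i\theta/2}{\mathfrak a}_j^*$, ${\mathfrak b}_{2j}=-ie^{i\theta/2}{\mathfrak a}_j+ie^{-i\theta/2}{\mathfrak a}_j^*$, ordered as ${\mathfrak b}=({\mathfrak b}_1,{\mathfrak b}_3,\dots,{\mathfrak b}_{2L-1},{\mathfrak b}_2,\dots,{\mathfrak b}_{2L})^t$. In these variables $\mathbf H^{\mathrm{Kit}}_\Lambda(\alpha)=iw\sum_{j=1}^{L-1}{\mathfrak b}_{2j}{\mathfrak b}_{2j+1}+iw\cos(\alpha){\mathfrak b}_{2L}{\mathfrak b}_1-iw\sin(\alpha){\mathfrak b}_{2L}{\mathfrak b}_2$, and $A_\Lambda(\alpha)$ denotes the unique real skew-symmetric matrix with $\mathbf H^{\mathrm{Kit}}_\Lambda(\alpha)=\frac i2{\mathfrak b}^tA_\Lambda(\alpha){\mathfrak b}$. For invertible real skew-symmetric $T_0,T_1$, $\mathrm{Sf}_2(T_0,T_1)=\mathrm{sgn}\det(M)$ for any invertible real $M$ with $T_1=MT_0M^*$; the $\mathbb Z_2$-valued spectral flow of a path with invertible endpoints is $\mathrm{Sf}_2$ of its endpoints. *)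

From HB Require Import structures.
From mathcomp Require Import all_boot all_order all_algebra.
From mathcomp Require Import all_classical all_reals all_analysis.
Set Implicit Arguments. Unset Strict Implicit. Unset Printing Implicit Defensive.
Import Order.TTheory GRing.Theory Num.Theory.
Local Open Scope ring_scope.

Section Kitaev.
Variable R : realType.

(* Position (0-based) of the Majorana operator b_n (n = 1..2L) in the ordered
   vector  b = (b_1, b_3, ..., b_{2L-1}, b_2, b_4, ..., b_{2L})^t. *)
Definition maj_pos (L n : nat) : nat :=
  if odd n then n./2 else (L + n./2 - 1)%N.

(* The Majorana form of H^Kit_Lambda(alpha) as a list of terms (c, p, q),
   each standing for  i * c * b_p b_q :
     i w sum_{j=1}^{L-1} b_{2j} b_{2j+1} + i w cos(alpha) b_{2L} b_1
       - i w sin(alpha) b_{2L} b_2. *)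
Definition kit_terms (L : nat) (w alpha : R) : seq (R * nat * nat) :=
  [seq (w, (2 * j)%N, (2 * j).+1) | j <- iota 1 (L - 1)] ++
  [:: (w * cos alpha, (2 * L)%N, 1%N); (- (w * sin alpha), (2 * L)%N, 2%N)].

(* The real skew-symmetric matrix A with H = (i/2) b^t A b: a term
   i c b_p b_q (p <> q, anticommuting Majoranas) equals
   (i/2) (c b_p b_q - c b_q b_p), i.e. contributes c to A_{pq} and -c to A_{qp}. *)
Definition A_Lambda (L : nat) (w alpha : R) : 'M[R]_(2 * L) :=
  \matrix_(k, l)
    \sum_(t <- kit_terms L w alpha)
      (t.1.1 * (((k == maj_pos L t.1.2 :> nat) && (l == maj_pos L t.2 :> nat))%:R
              - ((k == maj_pos L t.2 :> nat) && (l == maj_pos L t.1.2 :> nat))%:R)).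

(* Z_2-valued spectral flow between invertible real skew-symmetric T0, T1:
   Sf_2(T0,T1) = sgn det M for any invertible real M with T1 = M T0 M^*.
   [Sf2_is T0 T1 s] says that Sf_2(T0,T1) is well defined (endpoints invertible
   skew-symmetric, such an M exists) and equals s. *)
Definition Sf2_is (n : nat) (T0 T1 : 'M[R]_n) (s : R) : Prop :=
  [/\ T0^T = - T0, T1^T = - T1, T0 \in unitmx & T1 \in unitmx] /\
  (exists M : 'M[R]_n, M \in unitmx /\ T1 = M *m T0 *m M^T) /\
  (forall M : 'M[R]_n, M \in unitmx -> T1 = M *m T0 *m M^T ->
        Num.sg (\det M) = s).

End Kitaev.

From HB Require Import structures.
From mathcomp Require Import all_boot all_order all_algebra.
From mathcomp Require Import all_classical all_reals all_analysis.
From mathcomp Require Import complex.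
From mathcomp Require Import ring lra zify.
Set Implicit Arguments.
Unset Strict Implicit.
Unset Printing Implicit Defensive.

Import Order.TTheory GRing.Theory Num.Theory.
Local Open Scope ring_scope.

(* At alpha = 0 and alpha = pi the Hamiltonian is the pairing
   b_{2j} b_{2j+1} along a cycle, with a sign c = cos alpha = +-1 on the
   closing bond: A(c) = Q_c J Q_c^T with J the standard symplectic form and
   Q_c = diag(w, S_c), S_c the cyclic shift with corner entry c.  Flipping the
   sign of b_1 gives a witness M with A(-1) = M A(1) M^T and det M = -1.  Any
   other witness differs from it by a matrix fixing A(1), i.e. by a conjugate
   of a symplectic matrix, and symplectic matrices have positive determinant:
   for N J N^T = J one has N N^T + 1 = N (N^T - J N^T J), where the left side
   has positive determinant and the second factor has the complex form
   [[X, -Y], [Y, X]], whose determinant |det (X + iY)|^2 is nonnegative. *)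

Section SymplecticDeterminant.
Variable R : rcfType.

Definition symplectic_form n : 'M[R]_(n + n) := block_mx 0 (- 1%:M) 1%:M 0.

Lemma symplectic_form_unit n : symplectic_form n \in unitmx.
Proof.
suff /mulmx1_unit[] : symplectic_form n *m (- symplectic_form n) = 1%:M by [].
rewrite /symplectic_form opp_block_mx !oppr0 opprK mulmx_block.
rewrite !mulmx0 !mul0mx !addr0 !add0r mulmxN mulNmx !mulmx1 opprK.
by rewrite (scalar_mx_block n n).
Qed.

Lemma det_complex_block_ge0 n (X Y : 'M[R]_n) :
  0 <= \det (block_mx X (- Y) Y X).
Proof.
pose f := real_complex R; set K := block_mx _ _ _ _.
rewrite -ler0c -det_map_mx.
pose X' := map_mx f X; pose Y' := map_mx f Y.
have -> : map_mx f K = block_mx X' (- Y') Y' X' by rewrite map_block_mx map_mxN.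
pose Lm : 'M[R[i]]_(n + n) := block_mx 1%:M 0 (- 'i%C%:M) 1%:M.
pose Rm : 'M[R[i]]_(n + n) := block_mx 1%:M 0 ('i%C%:M) 1%:M.
have ii : 'i%C * 'i%C = -1 :> R[i] by rewrite -expr2 sqr_i.
have triangularize : Lm *m block_mx X' (- Y') Y' X' *m Rm =
    block_mx (X' - 'i%C *: Y') (- Y') 0 (X' + 'i%C *: Y').
  rewrite !mulmx_block !mulmx0 !mul0mx !mulmx1 !mul1mx !addr0 !add0r.
  rewrite !mulNmx !mul_scalar_mx !mul_mx_scalar.
  congr block_mx.
  - by apply/matrixP => a b; rewrite !mxE mulrN opprK mulrDr mulrA ii; ring.
  - by apply/matrixP => a b; rewrite !mxE mulrN opprK addrC.
have -> : \det (block_mx X' (- Y') Y' X') =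
    \det (Lm *m block_mx X' (- Y') Y' X' *m Rm).
  by rewrite !det_mulmx !det_lblock !det1 !mulr1 mul1r.
rewrite triangularize det_ublock.
have -> : X' - 'i%C *: Y' = map_mx (@conjc R) (X' + 'i%C *: Y').
  apply/matrixP => a b; rewrite !mxE /=.
  by apply/eqP; rewrite eq_complex /=; apply/andP; split; apply/eqP; ring.
by rewrite det_map_mx mulrC mulcJ_ge0.
Qed.

Lemma row_gram_entry n (u : 'rV[R]_n) : (u *m u^T) 0 0 = \sum_j u 0 j ^+ 2.
Proof. by rewrite !mxE; apply: eq_bigr => j _; rewrite !mxE expr2. Qed.

Lemma det_scale_gram_add1_neq0 n (N : 'M[R]_n) t :
  0 <= t -> \det (t *: (N *m N^T) + 1) != 0.
Proof.
move=> t_ge0; apply/negP => /det0P[v v_neq0 hv].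
have : (v *m (t *: (N *m N^T) + 1) *m v^T) 0 0 = 0 by rewrite hv mul0mx mxE.
have -> : v *m (t *: (N *m N^T) + 1) *m v^T =
    t *: ((v *m N) *m (v *m N)^T) + v *m v^T.
  by rewrite mulmxDr mulmx1 mulmxDl trmx_mul -scalemxAr -scalemxAl !mulmxA.
rewrite mxE [in X in X + _]mxE !row_gram_entry.
have vN_ge0 : 0 <= \sum_j (v *m N) 0 j ^+ 2.
  by apply: sumr_ge0 => j _; apply: sqr_ge0.
have v_gt0 : 0 < \sum_j v 0 j ^+ 2.
  have sq_ge0 j : true -> 0 <= v 0 j ^+ 2 by move=> _; apply: sqr_ge0.
  rewrite lt_def sumr_ge0 ?andbT => [|j _]; last exact: sqr_ge0.
  apply: contra v_neq0 => /eqP/(psumr_eq0P sq_ge0) v0.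
  by apply/eqP/rowP => j; rewrite mxE; apply/eqP; rewrite -sqrf_eq0 v0.
by move=> ?; nra.
Qed.

Lemma det_gram_add1_gt0 n (N : 'M[R]_n) : 0 < \det (N *m N^T + 1).
Proof.
(* p.[t] = det (t N N^T + 1) is 1 at t = 0 and has no root in [0, 1]. *)
pose p := \det (\matrix_(i, j) ((N *m N^T) i j *: 'X + (i == j)%:R)
  : 'M[{poly R}]_n).
have p_at t : p.[t] = \det (t *: (N *m N^T) + 1).
  rewrite /p -horner_evalE -det_map_mx; congr (\det _); apply/matrixP => i j.
  by rewrite !mxE /= horner_evalE hornerD hornerZ hornerX hornerMn hornerC mulrC.
rewrite ltNge; apply/negP => p1_le0.
have [|x /andP[x_ge0 _] px] := @poly_ivt R (- p) 0 1 ler01.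
  by rewrite !hornerN !p_at scale0r add0r det1 scale1r lerN10 oppr_ge0.
have := det_scale_gram_add1_neq0 N x_ge0.
by rewrite -p_at; move: px; rewrite /root hornerN oppr_eq0 => ->.
Qed.

Lemma symplectic_det_gt0 n (N : 'M[R]_(n + n)) :
  N *m symplectic_form n *m N^T = symplectic_form n -> 0 < \det N.
Proof.
set J := symplectic_form n => NJ.
have JJ : J *m J = - 1%:M.
  rewrite mulmx_block !mulmx0 !mul0mx !add0r !addr0 mulmxN mulNmx !mulmx1.
  by rewrite (scalar_mx_block n n) opp_block_mx oppr0.
have gram_factor : N *m N^T + 1%:M = N *m (N^T - J *m N^T *m J).
  by rewrite mulmxBr !mulmxA NJ JJ opprK.
set A := ulsubmx N^T; set B := ursubmx N^T.
set C := dlsubmx N^T; set D := drsubmx N^T.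
have complex_form :
    N^T - J *m N^T *m J = block_mx (A + D) (- (C - B)) (C - B) (A + D).
  rewrite -[N^T]submxK -/A -/B -/C -/D !mulmx_block !mulmx0 !mul0mx.
  rewrite !add0r !addr0 !mulmxN !mulNmx !mulmx1 !mul1mx opp_block_mx.
  by rewrite add_block_mx !opprK opprB (addrC D).
have := det_gram_add1_gt0 N.
rewrite gram_factor complex_form det_mulmx => prod_gt0.
have := det_complex_block_ge0 (A + D) (C - B).
rewrite le_eqVlt => /orP[/eqP K0 | K_gt0].
  by rewrite -K0 mulr0 ltxx in prod_gt0.
by rewrite -(pmulr_lgt0 _ K_gt0).
Qed.

Lemma congr_stabilizer_det_gt0 n (Q N : 'M[R]_(n + n)) :
  Q \in unitmx ->
  N *m (Q *m symplectic_form n *m Q^T) *m N^T = Q *m symplectic_form n *m Q^T ->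
  0 < \det N.
Proof.
set T := Q *m _ *m _ => Q_unit NT; pose P := invmx Q *m N *m Q.
have PJ : P *m symplectic_form n *m P^T = symplectic_form n.
  have -> : P *m symplectic_form n *m P^T =
      invmx Q *m (N *m T *m N^T) *m (invmx Q)^T.
    by rewrite /P /T !trmx_mul !mulmxA.
  rewrite NT /T !mulmxA mulVmx // mul1mx -mulmxA -trmx_mul mulVmx //.
  by rewrite trmx1 mulmx1.
have := symplectic_det_gt0 PJ.
by rewrite /P !det_mulmx det_inv mulrAC mulVf ?mul1r // -unitfE -unitmxE.
Qed.

End SymplecticDeterminant.

Section SpectralFlow.
Variable R : realType.

Lemma Sf2_is_witness n (T0 M0 : 'M[R]_n) :
  T0^T = - T0 -> T0 \in unitmx -> M0 \in unitmx ->
  (forall N, N *m T0 *m N^T = T0 -> 0 < \det N) ->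
  Sf2_is T0 (M0 *m T0 *m M0^T) (Num.sg (\det M0)).
Proof.
move=> T0_skew T0_unit M0_unit stab_gt0.
split; [split=> // | split; first by exists M0].
- by rewrite !trmx_mul trmxK T0_skew mulNmx mulmxN mulmxA.
- by rewrite !unitmx_mul unitmx_tr M0_unit T0_unit.
move=> M M_unit /esym M_congr; pose N := invmx M0 *m M.
have : 0 < \det N.
  apply: stab_gt0.
  have -> : N *m T0 *m N^T = invmx M0 *m (M *m T0 *m M^T) *m (invmx M0)^T.
    by rewrite /N trmx_mul !mulmxA.
  rewrite M_congr !mulmxA mulVmx // mul1mx -mulmxA -trmx_mul mulVmx //.
  by rewrite trmx1 mulmx1.
rewrite /N det_mulmx det_inv => ratio_gt0.
have -> : \det M = \det M0 * ((\det M0)^-1 * \det M).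
  by rewrite mulrA mulfV ?mul1r // -unitfE -unitmxE.
by rewrite sgrM (gtr0_sg ratio_gt0) mulr1.
Qed.

Lemma Sf2_is_castmx m n (e : m = n) (T0 T1 : 'M[R]_m) s :
  Sf2_is T0 T1 s -> Sf2_is (castmx (e, e) T0) (castmx (e, e) T1) s.
Proof. by case: n / e; rewrite !castmx_id. Qed.

End SpectralFlow.

Section MajoranaEntries.
Variable R : realType.

Definition kitaev_entry (L : nat) (w c : R) (k m : nat) : R :=
  w * ((k == L + m - 1)%N && (0 < m < L)%N)%:R
  - w * ((m == L + k - 1)%N && (0 < k < L)%N)%:R
  + w * c * ((k == L + L - 1)%N && (m == 0)%N)%:R
  - w * c * ((k == 0)%N && (m == L + L - 1)%N)%:R.

Lemma maj_pos_even L j : maj_pos L (2 * j) = (L + j - 1)%N.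
Proof. by rewrite /maj_pos oddM /= mul2n doubleK. Qed.

Lemma maj_pos_odd L j : maj_pos L (2 * j).+1 = j.
Proof. by rewrite /maj_pos /= oddM /= mul2n uphalf_double. Qed.

Lemma sumr_pred1_uniq (T : eqType) (s : seq T) (x : T) (b : bool) : uniq s ->
  \sum_(y <- s) ((y == x) && b)%:R = ((x \in s) && b)%:R :> R.
Proof.
elim: s => [|y s IHs] /=; first by rewrite big_nil.
case/andP=> y_notin_s s_uniq; rewrite big_cons IHs // in_cons.
by case: (eqVneq y x) => [<-|_] /=; rewrite ?(negbTE y_notin_s) ?addr0 ?add0r.
Qed.

Lemma sum_bond_indicator L (f : nat -> nat) (x y : nat) :
  \sum_(j <- iota 1 (L - 1)) ((x == f j) && (y == j))%:R
    = ((x == f y) && (0 < y < L)%N)%:R :> R.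
Proof.
transitivity (\sum_(j <- iota 1 (L - 1)) ((j == y) && (x == f y))%:R : R).
  by apply: eq_bigr => j _; case: (eqVneq j y) => [->|_]; rewrite ?andbT ?andbF.
rewrite sumr_pred1_uniq ?iota_uniq // mem_iota andbC; congr (_ && _)%:R.
by apply/idP/idP => /andP[? ?]; apply/andP; split; lia.
Qed.

Lemma A_Lambda_entry L w a (k m : 'I_(2 * L)) : sin a = 0 ->
  A_Lambda L w a k m = kitaev_entry L w (cos a) k m.
Proof.
move=> sin_a; rewrite mxE /kit_terms big_cat big_map /= !big_cons big_nil /=.
under eq_bigr => j _ do rewrite maj_pos_even maj_pos_odd.
rewrite -big_distrr /= sumrB sum_bond_indicator.
under eq_bigr => j _ do rewrite andbC.
rewrite sum_bond_indicator (maj_pos_even L L) (maj_pos_even L 1) sin_a.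
by rewrite /kitaev_entry /maj_pos /=; ring.
Qed.

End MajoranaEntries.

Ltac case_indicators :=
  repeat match goal with |- context [ GRing.natmul _ (nat_of_bool ?b) ] =>
    lazymatch b with true => fail | false => fail | _ =>
      let Hb := fresh "Hb" in
      case: (boolP b) => Hb; [rewrite ?Hb | rewrite ?(negbTE Hb)];
      try (exfalso; lia) end end.

Section CyclicChain.
Variable R : realType.
Variables (l : nat) (w : R).
Local Notation L := l.+1.

Definition shift_mx (c : R) : 'M[R]_L := \matrix_(i, j)
  ((j == i.+1 :> nat)%:R + c * ((i == l :> nat) && (j == 0 :> nat))%:R).

Definition chain_mx c : 'M[R]_(L + L) :=
  block_mx 0 (- (w *: (shift_mx c)^T)) (w *: shift_mx c) 0.

Definition chain_frame c : 'M[R]_(L + L) := block_mx w%:M 0 0 (shift_mx c).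

Lemma chain_mx_entry c (k m : 'I_(L + L)) :
  chain_mx c k m = kitaev_entry L w c k m.
Proof.
rewrite /kitaev_entry.
case: (split_ordP k) => i ->; case: (split_ordP m) => j ->;
  rewrite ?block_mxEul ?block_mxEur ?block_mxEdl ?block_mxEdr !mxE /=;
  have := ltn_ord i; have := ltn_ord j => jL iL.
all: case_indicators; first [by ring | by rewrite ?mulr0n ?mulr1n; ring].
Qed.

Lemma chain_mx_congr c :
  chain_mx c = chain_frame c *m symplectic_form R L *m (chain_frame c)^T.
Proof.
rewrite /chain_mx /chain_frame /symplectic_form tr_block_mx !trmx0 tr_scalar_mx.
rewrite !mulmx_block !mulmx0 !mul0mx !addr0 !add0r !mulmxN !mulmx1 !mul0mx.
by rewrite mulNmx mul_scalar_mx mul_mx_scalar.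
Qed.

Lemma chain_mx_skew c : (chain_mx c)^T = - chain_mx c.
Proof.
rewrite /chain_mx tr_block_mx !trmx0 opp_block_mx !oppr0 opprK.
by rewrite raddfN /= !linearZ /= trmxK.
Qed.

Lemma shift_mxE c i j :
  shift_mx c i j = (if i == l :> nat then c else 1) * (j == ordS i)%:R.
Proof.
rewrite mxE -[j == ordS i]/(j == (i.+1 %% L)%N :> nat).
have := ltn_ord i; have := ltn_ord j.
case: (eqVneq (i : nat) l) => [-> | i_neq_l] jL iL.
  by rewrite modnn (_ : (j == L :> nat) = false) ?add0r //; apply/negbTE; lia.
by rewrite modn_small ?mul1r ?mulr0 ?addr0 //; lia.
Qed.

Lemma shift_mx_orthogonal c : c * c = 1 -> shift_mx c *m (shift_mx c)^T = 1%:M.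
Proof.
move=> cc; apply/matrixP => i k; rewrite [LHS]mxE [RHS]mxE.
under eq_bigr => j _ do rewrite [X in _ * X]mxE !shift_mxE.
rewrite (bigD1 (ordS i)) //= big1 ?addr0 => [|j /negbTE->]; last first.
  by rewrite mulr0 mul0r.
rewrite eqxx mulr1 (inj_eq (@ordS_inj L)).
case: (eqVneq i k) => [<-|_]; last by rewrite !mulr0.
by case: ifP; rewrite ?mulr1.
Qed.

Hypothesis w_neq0 : w != 0.

Lemma chain_frame_unit c : c * c = 1 -> chain_frame c \in unitmx.
Proof.
move=> /shift_mx_orthogonal/mulmx1_unit[shift_unit _].
rewrite unitmxE det_ublock det_scalar unitrM -unitmxE shift_unit.
by rewrite unitfE expf_neq0.
Qed.

Lemma chain_mx_unit c : c * c = 1 -> chain_mx c \in unitmx.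
Proof.
move=> cc; rewrite chain_mx_congr !unitmx_mul unitmx_tr chain_frame_unit //.
by rewrite symplectic_form_unit.
Qed.

Definition flip_first : 'M[R]_(L + L) :=
  block_mx (diag_mx (\row_i (if i == ord0 then -1 else 1))) 0 0 1%:M.

Lemma det_flip_first : \det flip_first = -1.
Proof.
rewrite det_ublock det1 mulr1 det_diag (bigD1 ord0) //= big1 ?mulr1.
  by rewrite mxE eqxx.
by move=> i /negbTE i_neq0; rewrite mxE i_neq0.
Qed.

Lemma flip_first_congr :
  flip_first *m chain_mx 1 *m flip_first^T = chain_mx (-1).
Proof.
have flip_shift : shift_mx 1 *m diag_mx (\row_i (if i == ord0 then -1 else 1))
    = shift_mx (-1).
  rewrite mul_mx_diag; apply/matrixP => i j; rewrite !mxE.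
  rewrite -[j == ord0]/(j == 0 :> nat).
  case: (eqVneq (j : nat) 0) => [->|j_neq0]; last by rewrite !andbF !mulr0 !mulr1.
  by rewrite andbT /=; ring.
rewrite /flip_first /chain_mx tr_block_mx !trmx0 trmx1 tr_diag_mx !mulmx_block.
rewrite !mulmx0 !mul0mx !addr0 !add0r !mulmx1 !mul1mx mul0mx mulmxN.
by rewrite -scalemxAl -scalemxAr flip_shift -flip_shift trmx_mul tr_diag_mx.
Qed.

Lemma Sf2_is_chain : Sf2_is (chain_mx 1) (chain_mx (-1)) (-1).
Proof.
have sg_flip : Num.sg (\det flip_first) = -1 by rewrite det_flip_first sgrN1.
rewrite -flip_first_congr -sg_flip; apply: Sf2_is_witness.
- exact: chain_mx_skew.
- by rewrite chain_mx_unit ?mulr1.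
- by rewrite unitmxE det_flip_first unitrN unitr1.
- move=> N; rewrite chain_mx_congr.
  by apply: congr_stabilizer_det_gt0; rewrite chain_frame_unit ?mulr1.
Qed.

End CyclicChain.

Theorem proposition3p12 (R : realType) (L : nat) (w theta : R) :
  (2 <= L)%N -> w != 0 ->
  Sf2_is (A_Lambda L w 0) (A_Lambda L w pi) (-1).
Proof.
case: L => [|[|l]] // _ w_neq0.
have e : (l.+2 + l.+2 = 2 * l.+2)%N by rewrite mul2n addnn.
have A_chain a c : sin a = 0 -> cos a = c ->
    A_Lambda l.+2 w a = castmx (e, e) (chain_mx l.+1 w c).
  move=> sin_a cos_a; apply/matrixP => k m.
  by rewrite castmxE A_Lambda_entry // chain_mx_entry cos_a.
rewrite (A_chain 0 1 (sin0 R) (cos0 R)) (A_chain pi (-1) (sinpi R) (cospi R)).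
exact/Sf2_is_castmx/Sf2_is_chain.
Qed.
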